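(* Let $\mathcal G=(N,T,I,P,S)$ be an indexed grammar with $S\in\mathrm{Useful}$, and let $\overline{\mathcal G}$ be its annotated version. Then $L(\overline{\mathcal G})=L(\mathcal G)$, and $\overline{\mathcal G}$ is productive: for every sentential form $u$ of $\overline{\mathcal G}$ with $(S,\mathrm{Useful})\Rightarrow^*_{\overline{\mathcal G}}u$ there exists $w\in T^*$ with $u\Rightarrow^*_{\overline{\mathcal G}}w$.
   Context: An indexed grammar is a tuple $\mathcal{G}=(N,T,I,P,S)$ where $N$ (non-terminals), $T$ (terminals) and $I$ (index or stack symbols) are finite pairwise disjoint alphabets, $S\in N$, and $P$ is a finite set of productions, each of one of the forms $A\to w$ ($A\in N$, $w\in T^*$), $A\to BC$ ($A,B,C\in N$), $A\to Bf$ ($A,B\in N$, $f\in I$), $Af\to B$ ($A,B\in N$, $f\in I$). A term is written $A[z]$ with $A\in N$ and $z\in I^*$ (the stack, leftmost symbol on top; $A$ alone means $A[\varepsilon]$); a sentential form is a finite word whose letters are terms or terminals. The one-step derivation relation $\Rightarrow_{\mathcal G}$ is: for sentential forms $u,v$, $uA[z]v\Rightarrow uB[z]C[z]v$ if $A\to BC\in P$; $uA[z]v\Rightarrow uB[fz]v$ if $A\to Bf\in P$; $uA[fz]v\Rightarrow uB[z]v$ if $Af\to B\in P$; $uA[z]v\Rightarrow uwv$ if $A\to w\in P$ with $w\in T^*$. $\Rightarrow^*_{\mathcal G}$ is its reflexive transitive closure and $L(\mathcal G)=\{w\in T^*: S\Rightarrow^*_{\mathcal G} w\}$. For $X\subseteq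 N$ and $z\in I^*$, $z\cdot X=\{A\in N:\exists u\in(X\cup T)^*,\ A[z]\Rightarrow^*_{\mathcal G}u\}$, where a word of $(X\cup T)^*$ is regarded as a sentential form in which every non-terminal has empty stack. $\mathrm{Useful}=\{A\in N:\exists w\in T^*,\ A\Rightarrow^*_{\mathcal G}w\}$. Assuming $S\in\mathrm{Useful}$, the annotated version of $\mathcal G$ is the indexed grammar $\overline{\mathcal G}=(\overline N,T,\overline I,\overline P,\overline S)$ with $\overline N=\{(A,X)\in N\times 2^N: A\in X\}$, $\overline I=I\times 2^N$, $\overline S=(S,\mathrm{Useful})$, and $\overline P$ consisting exactly of: $(A,X)\to w$ for every $A\to w\in P$ ($w\in T^*$) and every $X$ with $A\in X$; $(A,X)\to(B,X)(C,X)$ for every $A\to BC\in P$ and every $X$ with $A,B,C\in X$; $(A,X)\to(B,Y)(f,X)$ for every $A\to Bf\in P$ and every $X$, where $Y=f\cdot X$, $A\in X$ and $B\in Y$; $(A,Y)(f,X)\to(B,X)$ for every $Af\to B\in P$ and every $X$, where $Y=f\cdot X$, $A\in Y$ and $B\in X$. *)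

From Stdlib Require Import List ClassicalDescription.
From mathcomp Require Import all_boot.
Set Implicit Arguments. Unset Strict Implicit. Unset Printing Implicit Defensive.

Section IG.
Variables (N T I : Type).

(* Productions of an indexed grammar:
   RTerm A w  : A -> w      (w in T^* )
   RBin A B C : A -> B C
   RPush A B f: A -> B f
   RPop A f B : A f -> B *)
Inductive rule :=
| RTerm of N & seq T
| RBin of N & N & N
| RPush of N & N & I
| RPop of N & I & N.

(* Letters of sentential forms: a term A[z] (leftmost index = top) or a terminal. *)
Inductive sym :=
| NT of N & seq I
| Tm of T.

Definition sform := seq sym.

Inductive step (P : rule -> Prop) : sform -> sform -> Prop :=
| step_bin u v A B C z : P (RBin A B C) ->
    step P (u ++ NT A z :: v) (u ++ NT B z :: NT C z :: v)
| step_push u v A B f z : P (RPush A B f) ->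
    step P (u ++ NT A z :: v) (u ++ NT B (f :: z) :: v)
| step_pop u v A B f z : P (RPop A f B) ->
    step P (u ++ NT A (f :: z) :: v) (u ++ NT B z :: v)
| step_term u v A w z : P (RTerm A w) ->
    step P (u ++ NT A z :: v) (u ++ map Tm w ++ v).

Inductive derives (P : rule -> Prop) : sform -> sform -> Prop :=
| der_refl u : derives P u u
| der_step u v w : step P u v -> derives P v w -> derives P u w.

Definition language (P : rule -> Prop) (S : N) (w : seq T) : Prop :=
  derives P [:: NT S [::]] (map Tm w).

Definition productive (P : rule -> Prop) (S : N) : Prop :=
  forall u, derives P [:: NT S [::]] u -> exists w : seq T, derives P u (map Tm w).

End IG.

Arguments NT {N T I}.
Arguments RTerm {N T I}.
Arguments RBin {N T I}.
Arguments RPush {N T I}.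
Arguments RPop {N T I}.
Arguments Tm {N T I}.

Definition pbool (p : Prop) : bool := if excluded_middle_informative p then true else false.

Section Annot.
Variables (N T I : finType).
Variable P : seq (rule N T I).
Definition inP (r : rule N T I) : Prop := List.In r P.

(* u is in (X u T)^*: all nonterminals have empty stack and lie in X. *)
Definition over (X : {set N}) (u : sform N T I) : Prop :=
  List.Forall (fun s => match s with NT B z => z = [::] /\ B \in X | Tm _ => True end) u.

Definition dot (z : seq I) (X : {set N}) : {set N} :=
  [set A | pbool (exists u, over X u /\ derives inP [:: NT A z] u)].

Definition useful_set : {set N} :=
  [set A | pbool (exists w : seq T, derives inP [:: NT A [::]] (map Tm w))].

Definition Nbar := {p : N * {set N} | p.1 \in p.2}.
Definition Ibar := (I * {set N})%type.

Definition Pbar (r : rule Nbar T Ibar) : Prop :=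
  match r with
  | RTerm a w => inP (RTerm (sval a).1 w)
  | RBin a b c => (sval b).2 = (sval a).2 /\ (sval c).2 = (sval a).2 /\
                  inP (RBin (sval a).1 (sval b).1 (sval c).1)
  | RPush a b (f, X) => (sval a).2 = X /\ (sval b).2 = dot [:: f] X /\
                  inP (RPush (sval a).1 (sval b).1 f)
  | RPop a (f, X) b => (sval a).2 = dot [:: f] X /\ (sval b).2 = X /\
                  inP (RPop (sval a).1 f (sval b).1)
  end.

Definition Sbar (S : N) (hS : S \in useful_set) : Nbar :=
  exist (fun p : N * {set N} => p.1 \in p.2) (S, useful_set) hS.

End Annot.

(* Erasing annotations maps derivations of the annotated grammar to derivations
   of G, which gives one inclusion.  For the rest write [iter_dot (f1 ... fn)]
   for f1 . (f2 . ( ... (fn . Useful))): reachable annotated terms (A, X)[zb]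
   satisfy X = iter_dot y, where y is zb with its annotations erased, and the
   annotations inside zb are determined the same way.  Two facts carry the proof.
   First, y . Useful is contained in iter_dot y: cutting a derivation from
   A[f y] at the points where the stack shrinks back to y shows that A[f]
   derives a word over y . Useful.  Second, A in iter_dot y makes A[y] derive a
   terminal word: append y to every stack of a derivation witnessing A in f . X.
   The first fact lifts every G-derivation of a terminal word from A[y], by
   induction on its length, to the annotated grammar; the second makes every
   reachable annotated term productive. *)

From Pilot Require Import Defs.
From mathcomp Require Import all_boot.
From Stdlib Require Import ClassicalDescription.
Set Implicit Arguments. Unset Strict Implicit. Unset Printing Implicit Defensive.

Lemma cat_eq_cat_cons (A : Type) (u1 u2 l r : seq A) x : u1 ++ u2 = l ++ x :: r ->
  (exists m, u1 = l ++ x :: m /\ r = m ++ u2) \/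
  (exists l', l = u1 ++ l' /\ u2 = l' ++ x :: r).
Proof.
elim: u1 l => [|y u1 IH] l /=; first by move=> ->; right; exists l.
case: l => [|y' l] /= [<- E]; first by left; exists u1.
by case: (IH _ E) => [[m [-> ->]]|[l' [-> ->]]]; [left; exists m | right; exists l'].
Qed.

Lemma map_eq_cat (A B : Type) (f : A -> B) s (u1 u2 : seq B) : map f s = u1 ++ u2 ->
  exists s1 s2, [/\ s = s1 ++ s2, u1 = map f s1 & u2 = map f s2].
Proof.
elim: u1 s => [|x u1 IH] s /=; first by move=> <-; exists [::], s.
by case: s => [|a s] //= [<- /IH [s1 [s2 [-> -> ->]]]]; exists (a :: s1), s2.
Qed.

Section Derivations.
Variables (N T I : Type) (P : rule N T I -> Prop).
Notation sf := (sform N T I).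

Inductive sym_step : sym N T I -> sf -> Prop :=
| sym_step_bin A B C z : P (RBin A B C) -> sym_step (NT A z) [:: NT B z; NT C z]
| sym_step_push A B f z : P (RPush A B f) -> sym_step (NT A z) [:: NT B (f :: z)]
| sym_step_pop A B f z : P (RPop A f B) -> sym_step (NT A (f :: z)) [:: NT B z]
| sym_step_term A w z : P (RTerm A w) -> sym_step (NT A z) (map Tm w).

Lemma step_decompose u v : step P u v ->
  exists l s r e, sym_step s e /\ u = l ++ s :: r /\ v = l ++ e ++ r.
Proof.
by case=> [l r A B C z H|l r A B f z H|l r A B f z H|l r A w z H];
  do 4 eexists; (split; [by constructor; exact H | by split]).
Qed.

Lemma step_in_context l s r e : sym_step s e -> step P (l ++ s :: r) (l ++ e ++ r).
Proof. by case=> *; constructor. Qed.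

Lemma step_single s e : sym_step s e -> step P [:: s] e.
Proof. by move=> /(step_in_context [::] [::]); rewrite cats0. Qed.

Lemma derives_trans u v w : derives P u v -> derives P v w -> derives P u w.
Proof. by elim=> // u0 v0 w0 H _ IH /IH; apply: der_step. Qed.

Lemma derives_single s e : sym_step s e -> derives P [:: s] e.
Proof. by move/step_single/der_step; apply; apply: der_refl. Qed.

Lemma derives_frame l u v r : derives P u v -> derives P (l ++ u ++ r) (l ++ v ++ r).
Proof.
elim=> [u0|u0 v0 w0 + _]; first exact: der_refl.
move=> /step_decompose [l0 [s [r0 [e [H [-> ->]]]]]]; apply: der_step.
by rewrite -!catA /= (catA l l0) (catA l l0); apply: step_in_context.
Qed.

Lemma derives_cat u1 v1 u2 v2 : derives P u1 v1 -> derives P u2 v2 ->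
  derives P (u1 ++ u2) (v1 ++ v2).
Proof.
move=> /(derives_frame [::] u2) D1 /(derives_frame v1 [::]); rewrite !cats0.
exact: derives_trans.
Qed.

Lemma derives_terminal_all (u : sf) :
  List.Forall (fun s => exists w : seq T, derives P [:: s] (map Tm w)) u ->
  exists w : seq T, derives P u (map Tm w).
Proof.
elim=> [|s u' [w1 D1] _ [w2 D2]]; first by exists [::]; apply: der_refl.
by exists (w1 ++ w2); rewrite map_cat; apply: (derives_cat (u1 := [:: s])).
Qed.

Inductive nderives : nat -> sf -> sf -> Prop :=
| nderives0 u : nderives 0 u u
| nderivesS n u v w : step P u v -> nderives n v w -> nderives n.+1 u w.

Lemma derivesP u v : derives P u v <-> exists n, nderives n u v.
Proof.
split; first elim=> [u0|u0 v0 w0 H _ [n Dn]]; first by exists 0; constructor.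
  by exists n.+1; apply: nderivesS H Dn.
by case=> n; elim=> [u0|m u0 v0 w0 H _ D]; [apply: der_refl | apply: der_step H D].
Qed.

Lemma nderives0_eq u v : nderives 0 u v -> u = v.
Proof. by move E : 0 => m D; case: D E. Qed.

Lemma nderives_single n s w : nderives n.+1 [:: s] w ->
  exists2 e, sym_step s e & nderives n e w.
Proof.
move En : n.+1 => m; move Es : [:: s] => u D; case: D En Es => // m' u' v w'.
move=> /step_decompose [l [s' [r [e [H [-> ->]]]]]] D [->].
by case: l D => [|? []] //= D [-> Er]; exists e; rewrite -?Er ?cats0 in D.
Qed.

Lemma nderives_cat n u1 u2 w : nderives n (u1 ++ u2) w ->
  exists n1 n2 w1 w2,
    [/\ n = n1 + n2, nderives n1 u1 w1, nderives n2 u2 w2 & w = w1 ++ w2].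
Proof.
move E : (u1 ++ u2) => u D; elim: D u1 u2 E => [u0|m u0 v0 w0 + _ IH] u1 u2 E.
  by exists 0, 0, u1, u2; rewrite -E; split => //; apply: nderives0.
move=> /step_decompose [l [s [r [e [H [Eu Ev]]]]]].
case: (cat_eq_cat_cons (etrans E Eu)) => [[m0 [E1 E2]]|[l' [E1 E2]]].
- have /esym/IH [n1 [n2 [w1 [w2 [-> D1 D2 ->]]]]] : v0 = (l ++ e ++ m0) ++ u2.
    by rewrite Ev E2 -!catA.
  exists n1.+1, n2, w1, w2; split => //; rewrite E1; apply: nderivesS D1.
  exact: step_in_context.
- have /esym/IH [n1 [n2 [w1 [w2 [-> D1 D2 ->]]]]] : v0 = u1 ++ (l' ++ e ++ r).
    by rewrite Ev E1 -!catA.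
  exists n1, n2.+1, w1, w2; split => //; first by rewrite addnS.
  by rewrite E2; apply: nderivesS D2; apply: step_in_context.
Qed.

Lemma step_terminal (w : seq T) v : ~ step P (map Tm w) v.
Proof.
have NT_notin (l r : sf) A z : map Tm w <> l ++ NT A z :: r.
  by elim: l w => [|x l IH] [|t w] //= [_ /IH].
move E : (map Tm w) => u H.
by case: H E => [l r A ????|l r A ????|l r A ????|l r A ???] /NT_notin.
Qed.

Lemma nderives_terminal n (w : seq T) v : nderives n (map Tm w) v -> v = map Tm w.
Proof.
move E : (map Tm w) => u D; case: D E => // m u' v' w' H _ Eu.
by rewrite -Eu in H; case: (step_terminal H).
Qed.

End Derivations.

Section StackAppend.
Variables (N T I : Type) (P : rule N T I -> Prop).

Definition append_stack (y : seq I) (s : sym N T I) : sym N T I :=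
  if s is NT A z then NT A (z ++ y) else s.

Lemma append_stack_terminal y (w : seq T) : map (append_stack y) (map Tm w) = map Tm w.
Proof. by elim: w => //= t w ->. Qed.

Lemma sym_step_append_stack y s e :
  sym_step P s e -> sym_step P (append_stack y s) (map (append_stack y) e).
Proof. by case=> *; rewrite /= ?append_stack_terminal; constructor. Qed.

Lemma derives_append_stack y u v : derives P u v ->
  derives P (map (append_stack y) u) (map (append_stack y) v).
Proof.
elim=> [u0|u0 v0 w0 + _]; first exact: der_refl.
move=> /step_decompose [l [s [r [e [H [-> ->]]]]]]; apply: der_step.
by rewrite !map_cat; apply/step_in_context/sym_step_append_stack.
Qed.

End StackAppend.

Lemma pboolP (p : Prop) : pbool p <-> p.
Proof. by rewrite /pbool; case: excluded_middle_informative. Qed.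

Section Annotation.
Variables (N T I : finType) (P : seq (rule N T I)).
Notation G := (inP P).
Notation U := (useful_set P).

Lemma in_dot A z X :
  A \in dot P z X <-> exists u, Defs.over X u /\ derives G [:: NT A z] u.
Proof. by rewrite inE; apply: pboolP. Qed.

Lemma in_useful A : A \in U <-> exists w : seq T, derives G [:: NT A [::]] (map Tm w).
Proof. by rewrite inE; apply: pboolP. Qed.

Lemma over_sub (X Y : {set N}) (u : sform N T I) :
  {subset X <= Y} -> Defs.over X u -> Defs.over Y u.
Proof. by move=> sXY; apply: List.Forall_impl => -[B z|t] // [-> /sXY]. Qed.

Lemma over_terminal X (w : seq T) : Defs.over X (map (@Tm N T I) w).
Proof. by elim: w => [|t w IH]; constructor. Qed.

Lemma over_useful_productive (u : sform N T I) :
  Defs.over U u -> exists w : seq T, derives G u (map Tm w).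
Proof.
move=> Hu; apply: derives_terminal_all; apply: List.Forall_impl Hu => -[B z|t].
  by case=> -> /in_useful.
by exists [:: t]; apply: der_refl.
Qed.

(* Induction on the length: a derivation from C[g s y] either splits at a binary
   rule or passes through C'[s' y] with s' shorter; once s is empty we stop at
   C[] itself, which lies in y . X. *)
Lemma nderives_stack_split n C s y X v :
  nderives G n [:: NT C (s ++ y)] v -> Defs.over X v ->
  exists2 v', derives G [:: NT C s] v' & Defs.over (dot P y X) v'.
Proof.
elim/ltn_ind: n C s v => n IH C [|g s] v D Ov.
  exists [:: NT C [::]]; first exact: der_refl.
  constructor => //; split => //; apply/in_dot; exists v.
  by split => //; apply/derivesP; exists n.
case: n IH D Ov => [_ /nderives0_eq <- /List.Forall_cons_iff [[]] // | n IH D Ov].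
case/nderives_single: D => e; move E : (NT C _) => x H.
case: H E => [A B C' z H|A B f z H|A B f z H|A w z H] [-> Ez].
- subst z; case/(nderives_cat (u1 := [:: NT B _])).
  move=> n1 [n2 [w1 [w2 [En D1 D2 Ew]]]].
  move: Ov; rewrite Ew => /List.Forall_app [O1 O2].
  have [lt1 lt2] : n1 < n.+1 /\ n2 < n.+1 by rewrite En !ltnS leq_addr leq_addl.
  have [v1 D1' O1'] := IH n1 lt1 B (g :: s) w1 D1 O1.
  have [v2 D2' O2'] := IH n2 lt2 C' (g :: s) w2 D2 O2.
  exists (v1 ++ v2); last exact/List.Forall_app.
  apply: der_step (derives_cat (u1 := [:: NT B _]) D1' D2').
  by apply: step_single; constructor.
- subst z => D; have [v' D' O'] := IH n (ltnSn n) B (f :: g :: s) v D Ov.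
  by exists v' => //; apply: der_step D'; apply: step_single; constructor.
- rewrite Ez => <- D; have [v' D' O'] := IH n (ltnSn n) B s v D Ov.
  by exists v' => //; apply: der_step D'; apply: step_single; constructor.
- move=> _; exists (map Tm w); last exact: over_terminal.
  by apply: derives_single; constructor.
Qed.

Definition iter_dot (y : seq I) : {set N} := foldr (fun f X => dot P [:: f] X) U y.

Lemma dot_useful_sub_iter_dot y : {subset dot P y U <= iter_dot y}.
Proof.
elim: y => [|f y IH] A /in_dot [u [Ou D]] /=.
  have [w Dw] := over_useful_productive Ou.
  by apply/in_useful; exists w; apply: derives_trans D Dw.
have /derivesP [n Dn] := D.
have [v' D' Ov'] := nderives_stack_split (s := [:: f]) Dn Ou.
by apply/in_dot; exists v'; split => //; apply: over_sub Ov'.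
Qed.

Lemma mem_iter_dot n A y (w : seq T) :
  nderives G n [:: NT A y] (map Tm w) -> A \in iter_dot y.
Proof.
move=> D; apply/dot_useful_sub_iter_dot/in_dot; exists (map Tm w).
by split; [apply: over_terminal | apply/derivesP; exists n].
Qed.

Lemma iter_dot_productive y A : A \in iter_dot y ->
  exists w : seq T, derives G [:: NT A y] (map Tm w).
Proof.
elim: y A => [|f y IH] A /=; first by move/in_useful.
case/in_dot=> v [Ov D]; have /= D' := derives_append_stack y D.
suff [w Dw] : exists w : seq T, derives G (map (append_stack y) v) (map Tm w).
  by exists w; apply: derives_trans D' Dw.
apply/derives_terminal_all/List.Forall_map; apply: List.Forall_impl Ov => -[B z|t] /=.
  by case=> -> /IH.
by exists [:: t]; apply: der_refl.
Qed.
End Annotation.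

Section AnnotatedGrammar.
Variables (N T I : finType) (P : seq (rule N T I)).
Notation G := (inP P).
Notation Gb := (Pbar P).
Notation iter_dot := (iter_dot P).

Definition annot (A : N) (X : {set N}) (h : A \in X) : Nbar N :=
  exist (fun p : N * {set N} => p.1 \in p.2) (A, X) h.

(* The invariant of annotated derivations started from (S, Useful). *)
Fixpoint wf_stack (zb : seq (Ibar N I)) : Prop :=
  if zb is (_, Y) :: zb' then Y = iter_dot (map fst zb') /\ wf_stack zb' else True.

Definition wf_sym (s : sym (Nbar N) T (Ibar N I)) : Prop :=
  if s is NT a zb then wf_stack zb /\ (sval a).2 = iter_dot (map fst zb) else True.

Definition erase (s : sym (Nbar N) T (Ibar N I)) : sym N T I :=
  match s with NT a zb => NT (sval a).1 (map fst zb) | Tm t => Tm t end.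

Lemma nderives_lift n a zb (w : seq T) : wf_sym (NT a zb) ->
  nderives G n [:: erase (NT a zb)] (map Tm w) -> derives Gb [:: NT a zb] (map Tm w).
Proof.
elim/ltn_ind: n a zb w => n IH a zb w [Wzb Ea].
case: n IH => [_ /nderives0_eq | n IH]; first by case: w => [|? []].
case/nderives_single => e; move E : (erase _) => x H.
case: H E => [A B C z H|A B f z H|A B f z H|A v z H] /= [EA Ez]; subst A.
- subst z; case/(nderives_cat (u1 := [:: NT B _])).
  move=> n1 [n2 [u1 [u2 [En D1 D2 /map_eq_cat [w1 [w2 [-> Eu1 Eu2]]]]]]]; subst u1 u2.
  have [lt1 lt2] : n1 < n.+1 /\ n2 < n.+1 by rewrite En !ltnS leq_addr leq_addl.
  have hB : B \in (sval a).2 by rewrite Ea; apply: mem_iter_dot D1.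
  have hC : C \in (sval a).2 by rewrite Ea; apply: mem_iter_dot D2.
  apply: der_step.
    by apply: step_single; apply: (@sym_step_bin _ _ _ _ a (annot hB) (annot hC)).
  rewrite map_cat; apply: (derives_cat (u1 := [:: NT (annot hB) zb])).
  + exact: IH lt1 (annot hB) zb w1 (conj Wzb Ea) D1.
  + exact: IH lt2 (annot hC) zb w2 (conj Wzb Ea) D2.
- subst z => D; have hB : B \in dot P [:: f] (sval a).2.
    by rewrite Ea; apply: (mem_iter_dot (y := f :: _)) D.
  apply: der_step.
    by apply: step_single; apply: (@sym_step_push _ _ _ _ a (annot hB) (f, _)).
  apply: (IH n (ltnSn n) (annot hB) ((f, (sval a).2) :: zb) w _ D).
  by rewrite /= Ea.
- case: zb Wzb Ea Ez => [|[g X] zb] //= [EX Wzb] Ea [Eg Ez] D; subst.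
  have hB : B \in iter_dot (map fst zb) by apply: mem_iter_dot D.
  apply: der_step.
    by apply: step_single; apply: (@sym_step_pop _ _ _ _ a (annot hB) (f, _)).
  exact: IH n (ltnSn n) (annot hB) zb w (conj Wzb erefl) D.
- have Tm_inj : injective (@Tm N T I) by move=> ?? [].
  move/nderives_terminal/(inj_map Tm_inj) => ->.
  by apply: derives_single; apply: (@sym_step_term _ _ _ _ a).
Qed.

Lemma erase_terminal (w : seq T) : map erase (map Tm w) = map Tm w.
Proof. by elim: w => //= t w ->. Qed.

Lemma sym_step_erase s e : sym_step Gb s e -> sym_step G (erase s) (map erase e).
Proof.
case=> [a b c z [_ [_ H]]|a b [g X] z [_ [_ H]]|a b [g X] z [_ [_ H]]|a w z H] /=;
  rewrite ?erase_terminal; by constructor.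
Qed.

Lemma derives_erase u v : derives Gb u v -> derives G (map erase u) (map erase v).
Proof.
elim=> [u0|u0 v0 w0 + _]; first exact: der_refl.
move=> /step_decompose [l [s [r [e [H [-> ->]]]]]]; apply: der_step.
by rewrite !map_cat; apply/step_in_context/sym_step_erase.
Qed.

Lemma sym_step_wf s e : sym_step Gb s e -> wf_sym s -> List.Forall wf_sym e.
Proof.
case=> [a b c z [Eb [Ec _]]|a b [g X] z [Ea [Eb _]]|a b [g X] z [Ea [Eb _]]|a w z _] /=.
- by move=> [Wz Ez]; do !constructor; rewrite // ?Eb ?Ec.
- by move=> [Wz Ez]; do !constructor; rewrite // -?Ea // Eb -Ea Ez.
- by move=> [[EX Wz] Ez]; do !constructor; rewrite // Eb.
- by move=> _; elim: w => [|t w IH]; constructor.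
Qed.

Lemma derives_wf u v : derives Gb u v -> List.Forall wf_sym u -> List.Forall wf_sym v.
Proof.
elim=> // u0 v0 w0 H _ IH Wu; apply: IH; move: H Wu.
move=> /step_decompose [l [s [r [e [H [-> ->]]]]]].
move=> /List.Forall_app [Wl /List.Forall_cons_iff [Ws Wr]].
apply/List.Forall_app; split => //.
by apply/List.Forall_app; split => //; apply: sym_step_wf Ws.
Qed.

Lemma wf_sym_productive s : wf_sym s -> exists w : seq T, derives Gb [:: s] (map Tm w).
Proof.
case: s => [a zb [Wzb Ea]|t]; last by exists [:: t]; apply: der_refl.
have := valP a; rewrite Ea => /iter_dot_productive [w /derivesP [n D]].
by exists w; apply: nderives_lift D.
Qed.

End AnnotatedGrammar.

Theorem lemma4p2 (N T I : finType) (P : seq (rule N T I)) (S : N)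
    (hS : S \in useful_set P) :
  (forall w : seq T, language (Pbar P) (Sbar hS) w <-> language (inP P) S w) /\
  productive (Pbar P) (Sbar hS).
Proof.
have WS : List.Forall (wf_sym P) [:: NT (Sbar hS) [::]] by constructor.
split=> [w|u /derives_wf /(_ WS) Wu]; first split.
- by move/derives_erase; rewrite erase_terminal.
- by case/derivesP=> n D; apply: (nderives_lift (n := n)).
- by apply: derives_terminal_all; apply: List.Forall_impl Wu => s /wf_sym_productive.
Qed.
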